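(* For issues that are not binary, local dominance improvement dynamics need not converge, even if all agents use the $\ell_\infty$ distance with the same constant uncertainty parameters and all agents have $\mathcal O$-legal preferences for a common order $\mathcal O$. One instance: - Issue 1 has candidates $\{0,1\}$ and issue 2 has candidates $\{a,b,c,d\}$ (ties broken alphabetically); there are $n=15$ agents, and $(r^1,r^2)=(2,1)$ for all agents. - Preferences are $\mathcal O$-legal for $\mathcal O=(1,2)$. - Agent $j$ ranks issue 2 as $b\succ c\succ a\succ d$ if $f^1=0$, and as $c\succ b\succ a\succ d$ if $f^1=1$. - Agent $k$ always ranks issue 2 as $a\succ d\succ b\succ c$. - The initial profile has score tuple $\{(7,8),(3,5,5,2)\}$ and $a_j=a_k=(0,a)$. From this profile the LDI steps $(0,a)\to(0,d)$ by $j$, $(0,a)\to(0,d)$ by $k$, $(0,d)\to(0,a)$ by $j$, $(0,d)\to(0,a)$ by $k$ form a cycle.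
   Context: Issues $\mathcal P=\{1,\dots,p\}$ with finite candidate sets $D_i$, and alternatives $\mathcal D=\prod_iD_i$. There are $n$ agents with strict rankings $\succ_j$ over $\mathcal D$, and vote profiles $a\in\mathcal D^n$. Score tuples and outcomes: - For a score tuple $v$ (vectors $v^i\in\mathbb N^{D_i}$), the plurality outcome $f(v)$ picks on each issue the top-scoring candidate, with lexicographic tie-breaking. - $v+b$ adds one vote for $b^i$ on each issue $i$. - $s_{-j}(a)$ is the score tuple of $a$ without agent $j$. $\ell_\infty$ uncertainty with parameters $r_j$: $$\tilde S_{-j}(a;r_j)=\prod_i\{v^i:\max_c|v^i(c)-s^i_{-j}(c;a)|\le r^i_j\}.$$ Local dominance: $\hat a_j$ $S$-beats $a_j$ if some $v\in S$ has $f(v+\hat a_j)\succ_j f(v+a_j)$. It $S$-dominates $a_j$ if it $S$-beats $a_j$ and $a_j$ does not $S$-beat it. An LDI step on issue $i$ (with $S=\tilde S_{-j}(a;r_j)$) is a change to a vote that $S$-dominates $a_j$, differs from $a_j$ only on issue $i$, and is not $S$-dominated by another vote differing from $a_j$ only on issue $i$. Dynamics: at each round a scheduler selects an agent and an issue on which that agent has an LDI step, and the agent takes it. Convergence means every such sequence from every initial profile is finite. $\mathcal O$-legality: for an order $\mathcal O=(o_1,\dots,o_p)$ of the issues, a ranking is $\mathcal O$-legal if its relative ordering of the candidates of issue $o_i$ depends only on the values of issues $o_1,\dots,o_{i-1}$. *)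

From mathcomp Require Import all_boot all_fingroup.
Unset Printing Implicit Defensive.

Section Model.

(* p issues; issue i has candidate set D_i = 'I_(m i), candidates ordered by
   index (lexicographic tie-breaking = smallest index wins). *)
Variables (p : nat) (m : 'I_p -> nat).

Definition alt := {dffun forall i : 'I_p, 'I_(m i)}.

Definition score := forall i : 'I_p, 'I_(m i) -> nat.

Definition add_vote (v : score) (b : alt) : score :=
  fun i c => v i c + (b i == c).

Definition is_winner {k : nat} (w : 'I_k -> nat) (c : 'I_k) : Prop :=
  forall c', w c' <= w c /\ (w c' = w c -> c <= c').

Definition outcome (v : score) (x : alt) : Prop :=
  forall i, is_winner (v i) (x i).

(* a strict ranking over D: R x y means x is strictly preferred to y *)
Definition strict_ranking (R : rel alt) : Prop :=
  irreflexive R /\ transitive R /\ (forall x y : alt, x != y -> R x y || R y x).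

Definition differs_only_on (i : 'I_p) (x y : alt) : Prop :=
  forall i', i' != i -> x i' = y i'.

(* O-legality for the order O = (O 0, O 1, ..., O (p-1)): the relative
   (ceteris paribus) ordering of candidates of issue O k depends only on the
   values of issues O 0, ..., O (k-1). *)
Definition O_legal (O : {perm 'I_p}) (R : rel alt) : Prop :=
  forall (k : 'I_p) (x y x' y' : alt),
    differs_only_on (O k) x y -> differs_only_on (O k) x' y' ->
    x (O k) = x' (O k) -> y (O k) = y' (O k) ->
    (forall k' : 'I_p, k' < k -> x (O k') = x' (O k')) ->
    R x y = R x' y'.

Variable n : nat.

Definition profile := {ffun 'I_n -> alt}.

Definition score_without (a : profile) (j : 'I_n) : score :=
  fun i c => \sum_(k < n | k != j) (a k i == c).

Definition uncertainty_set (a : profile) (j : 'I_n) (rj : 'I_p -> nat)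
  (v : score) : Prop :=
  forall i c, v i c <= score_without a j i c + rj i /\
              score_without a j i c <= v i c + rj i.

Definition S_beats (S : score -> Prop) (R : rel alt) (b' b : alt) : Prop :=
  exists v, S v /\ exists x y, outcome (add_vote v b') x /\
                               outcome (add_vote v b) y /\ R x y.

Definition S_dominates (S : score -> Prop) (R : rel alt) (b' b : alt) : Prop :=
  S_beats S R b' b /\ ~ S_beats S R b b'.

Definition LDI_step (pref : 'I_n -> rel alt) (r : 'I_n -> 'I_p -> nat)
  (a : profile) (j : 'I_n) (i : 'I_p) (b' : alt) : Prop :=
  S_dominates (uncertainty_set a j (r j)) (pref j) b' (a j) /\
  differs_only_on i (a j) b' /\
  ~ (exists b'', differs_only_on i (a j) b'' /\
       S_dominates (uncertainty_set a j (r j)) (pref j) b'' b').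

Definition update (a : profile) (j : 'I_n) (b' : alt) : profile :=
  [ffun k => if k == j then b' else a k].

Definition ldi_move (pref : 'I_n -> rel alt) (r : 'I_n -> 'I_p -> nat)
  (a a' : profile) : Prop :=
  exists j i b', LDI_step pref r a j i b' /\ a' = update a j b'.

Definition ldi_converges (pref : 'I_n -> rel alt) (r : 'I_n -> 'I_p -> nat)
  : Prop :=
  ~ exists s : nat -> profile, forall t, ldi_move pref r (s t) (s t.+1).

End Model.

Arguments add_vote {p m} v b i c.
Arguments is_winner {k} w c.
Arguments outcome {p m} v x.
Arguments strict_ranking {p m} R.
Arguments differs_only_on {p m} i x y.
Arguments O_legal {p m} O R.
Arguments score_without {p m n} a j i c.
Arguments uncertainty_set {p m n} a j rj v.
Arguments S_beats {p m} S R b' b.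
Arguments S_dominates {p m} S R b' b.
Arguments LDI_step {p m n} pref r a j i b'.
Arguments update {p m n} a j b'.
Arguments ldi_move {p m n} pref r a a'.
Arguments ldi_converges {p m n} pref r.

(* The instance: issue 1 = 'I_2 ({0,1}), issue 2 = 'I_4 ({a,b,c,d}). *)
Definition m_ex (i : 'I_2) : nat := if val i == 0 then 2 else 4.
Definition r_ex (n : nat) (_ : 'I_n) (i : 'I_2) : nat := if val i == 0 then 2 else 1.

(* Under l_infty uncertainty the set of score tuples an agent considers possible is a box,
   a product over issues, and plurality is computed issue by issue.  So "some v in S makes
   b' beat b" says: there are outcomes x >- y such that on every issue i, some score vector
   of the i-th box yields x_i with b'_i added and y_i with b_i added.  Each box is finite,
   which makes local dominance decidable; the four LDI steps of the cycle are then checked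
   by evaluation.  The preferences are lexicographic with issue 1 first (everyone prefers
   0 there), hence O-legal, while j's ranking of issue 2 depends on the outcome of issue 1. *)

From mathcomp Require Import all_boot all_fingroup zify.

Fixpoint box (lo hi : seq nat) : seq (seq nat) :=
  match lo, hi with
  | a :: lo', b :: hi' => [seq x :: l | x <- iota a (b.+1 - a), l <- box lo' hi']
  | _, _ => [:: [::]]
  end.

Lemma box_complete lo hi (w : nat -> nat) :
  size lo = size hi -> (forall c, c < size lo -> nth 0 lo c <= w c <= nth 0 hi c) ->
  exists2 l, l \in box lo hi & forall c, c < size lo -> nth 0 l c = w c.
Proof.
elim: lo hi w => [|a lo IH] [|b hi] w //= => [_ _|[size_eq] w_in].
  by exists [::]; rewrite ?mem_seq1.
have [l l_box l_w] := IH hi (w \o succn) size_eq (fun c => w_in c.+1).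
exists (w 0 :: l); last by case.
apply/allpairsP; exists (w 0, l); split; rewrite //= mem_iota.
by have /= := w_in 0 isT; lia.
Qed.

Lemma box_sound lo hi l : size lo = size hi -> l \in box lo hi ->
  forall c, c < size lo -> nth 0 lo c <= nth 0 l c <= nth 0 hi c.
Proof.
elim: lo hi l => [|a lo IH] [|b hi] l //= [size_eq] /allpairsP[[x l'] [/= x_in l'_box ->]].
case=> [|c] /=; last exact: IH.
by move: x_in; rewrite mem_iota; lia.
Qed.

Definition winnerb (k : nat) (w : nat -> nat) (c : nat) : bool :=
  all (fun c' => (w c' <= w c) && ((w c' == w c) ==> (c <= c'))) (iota 0 k).

Lemma winnerbP k (w : 'I_k -> nat) (W : nat -> nat) (c : 'I_k) :
  (forall c', w c' = W c') -> reflect (is_winner w c) (winnerb k W c).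
Proof.
move=> wW; apply: (iffP allP) => [win c' | win c' c'_lt].
  have /win/andP[le_c /implyP le_eq] : val c' \in iota 0 k by rewrite mem_iota ltn_ord.
  by rewrite !wW; split=> // /eqP.
move: c'_lt; rewrite mem_iota add0n => c'_lt.
have [le_c le_eq] := win (Ordinal c'_lt); rewrite !wW in le_c le_eq.
by rewrite le_c; apply/implyP => /eqP.
Qed.

Arguments winnerbP {k w W c}.

(* Finite functions and [enum] are locked, hence opaque to evaluation; the decision
   procedures therefore work with candidates and scores coded as natural numbers. *)
Section Issue.

Variables (k : nat) (s : nat -> nat) (r : nat).

Definition box_around : seq (seq nat) :=
  box [seq s c - r | c <- iota 0 k] [seq s c + r | c <- iota 0 k].

Definition pair_winners (bx by' x y : nat) (l : seq nat) : bool :=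
  winnerb k (fun c => nth 0 l c + (bx == c)) x && winnerb k (fun c => nth 0 l c + (by' == c)) y.

Definition achievable_pair (bx by' x y : nat) : bool :=
  has (pair_winners bx by' x y) box_around.

Definition pair_witness (bx by' x y : nat) : seq nat :=
  nth [::] box_around (find (pair_winners bx by' x y) box_around).

Variable s' : 'I_k -> nat.
Hypothesis s_code : forall c, s' c = s c.

Definition within (w : 'I_k -> nat) : Prop :=
  forall c, w c <= s' c + r /\ s' c <= w c + r.

Definition vote_on (w : 'I_k -> nat) (b : 'I_k) : 'I_k -> nat := fun c => w c + (b == c).

Lemma size_box_bound (f : nat -> nat) : size [seq f c | c <- iota 0 k] = k.
Proof. by rewrite size_map size_iota. Qed.

Lemma box_around_within l : l \in box_around -> within (fun c => nth 0 l c).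
Proof.
move=> /box_sound; rewrite !size_box_bound => /(_ erefl) bounds c.
by have := bounds c (ltn_ord c); rewrite !(nth_map 0) ?size_iota // nth_iota // add0n s_code; lia.
Qed.

Lemma within_box_around w :
  within w -> exists2 l, l \in box_around & forall c : 'I_k, nth 0 l c = w c.
Proof.
move=> w_in; pose W n := if insub n is Some c then w c else 0.
have WE (c : 'I_k) : W c = w c by rewrite /W valK.
have [l l_box l_W] : exists2 l, l \in box_around &
    forall c, c < size [seq s c - r | c <- iota 0 k] -> nth 0 l c = W c.
  apply: box_complete => [|c]; rewrite !size_box_bound // => lt_ck.
  rewrite !(nth_map 0) ?size_iota // nth_iota // -[c]/(val (Ordinal lt_ck)) -s_code WE.
  by have := w_in (Ordinal lt_ck); lia.
by exists l => // c; rewrite l_W ?WE ?size_box_bound.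
Qed.

Lemma achievable_pairI (bx by' x y : 'I_k) w : within w ->
  is_winner (vote_on w bx) x -> is_winner (vote_on w by') y -> achievable_pair bx by' x y.
Proof.
move=> /within_box_around[l l_box l_w] win_x win_y.
have vote_l b c : vote_on w b c = nth 0 l c + (val b == c) by rewrite /vote_on l_w.
apply/hasP; exists l => //.
by apply/andP; split; [apply/(winnerbP (vote_l bx)) | apply/(winnerbP (vote_l by'))].
Qed.

Lemma pair_witnessP (bx by' x y : 'I_k) : achievable_pair bx by' x y ->
  let w := fun c : 'I_k => nth 0 (pair_witness bx by' x y) c in
  [/\ within w, is_winner (vote_on w bx) x & is_winner (vote_on w by') y].
Proof.
move=> found w; have /andP[win_x win_y] := nth_find [::] found.
split; [|exact: winnerbP win_x | exact: winnerbP win_y].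
by apply/box_around_within/mem_nth; rewrite -has_find.
Qed.

End Issue.

Arguments achievable_pairI {k s r s'} s_code {bx by' x y} w.
Arguments pair_witnessP {k s r s'} s_code {bx by' x y}.

Lemma S_beats_uncertaintyP {p} {m : 'I_p -> nat} {n} (a : profile p m n) j rj
    (R : rel (alt p m)) b' b (s : 'I_p -> nat -> nat) :
  (forall i c, score_without a j i c = s i c) ->
  S_beats (uncertainty_set a j rj) R b' b <->
  exists x y, R x y /\ forall i, achievable_pair (m i) (s i) (rj i) (b' i) (b i) (x i) (y i).
Proof.
move=> s_code; split=> [[v [v_in [x [y [win_x [win_y Rxy]]]]]] | [x [y [Rxy ach]]]].
  by exists x, y; split=> // i; apply: (achievable_pairI (s_code i)) (win_x i) (win_y i) => c;
    apply: v_in.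
have witnessP i := pair_witnessP (s_code i) (ach i).
exists (fun i c => nth 0 (pair_witness (m i) (s i) (rj i) (b' i) (b i) (x i) (y i)) c).
split; first by move=> i; case: (witnessP i).
by exists x, y; split; [|split] => // i; case: (witnessP i).
Qed.

Lemma strict_ranking_utility {p} {m : 'I_p -> nat} (u : alt p m -> nat) :
  injective u -> strict_ranking (fun x y => u y < u x).
Proof.
move=> u_inj; split; [|split] => [x | y x z | x y ne_xy]; first exact: ltnn.
  by move=> /[swap]; apply: ltn_trans.
by case: ltngtP => // /u_inj eq_yx; rewrite eq_yx eqxx in ne_xy.
Qed.

Lemma uniq_map_inj_in {T U : eqType} {f : T -> U} {s : seq T} :
  uniq (map f s) -> {in s &, injective f}.
Proof.
elim: s => //= z s IH /andP[fz_notin uniq_fs] x y /predU1P[-> | xs] /predU1P[-> | ys] // eq_f.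
- by rewrite eq_f map_f in fz_notin.
- by rewrite -eq_f map_f in fz_notin.
- exact: IH.
Qed.

Lemma ord2_cases (i : 'I_2) : i = ord0 \/ i = ord_max.
Proof. by case: i => [[|[|//]] ?]; [left | right]; apply: val_inj. Qed.

Lemma alt2_ext {m : 'I_2 -> nat} (x y : alt 2 m) :
  x ord0 = y ord0 -> x ord_max = y ord_max -> x = y.
Proof. by move=> eq0 eq1; apply/ffunP => i; case: (ord2_cases i) => ->. Qed.

Lemma O_legal_two_issues {m : 'I_2 -> nat} (R : rel (alt 2 m)) :
  (forall x y x' y' : alt 2 m, x ord_max = y ord_max -> x' ord_max = y' ord_max ->
     x ord0 = x' ord0 -> y ord0 = y' ord0 -> R x y = R x' y') ->
  O_legal 1%g R.
Proof.
move=> issue1_legal k x y x' y'; rewrite !perm1.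
case: (ord2_cases k) => ->.
  by move=> diff diff' eqx eqy _; apply: issue1_legal => //; [apply: diff | apply: diff'].
move=> diff diff' eqx eqy /(_ ord0 isT); rewrite perm1 => eqx0.
suff [-> ->] : x = x' /\ y = y' by [].
by split; apply: alt2_ext; rewrite // -diff // -diff'.
Qed.

Lemma m_ex_gt0 (i : 'I_2) : 0 < m_ex i.
Proof. by rewrite /m_ex; case: ifP. Qed.

(* Candidates are coded by their index; on issue 2, a, b, c, d are 0, 1, 2, 3. *)
Definition alt_of (x0 x1 : nat) : alt 2 m_ex :=
  [ffun i => Ordinal (ltn_pmod (if val i == 0 then x0 else x1) (m_ex_gt0 i))].

Lemma alt_ofE x0 x1 i : val (alt_of x0 x1 i) = (if val i == 0 then x0 else x1) %% m_ex i.
Proof. by rewrite ffunE. Qed.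

Lemma alt_of_val (x : alt 2 m_ex) : alt_of (x ord0) (x ord_max) = x.
Proof. by apply: alt2_ext; apply: val_inj; rewrite alt_ofE modn_small. Qed.

Definition codes_ex : seq (nat * nat) := [seq (x0, x1) | x0 <- iota 0 2, x1 <- iota 0 4].

Lemma mem_codes_ex z : (z \in codes_ex) = (z.1 < 2) && (z.2 < 4).
Proof.
apply/allpairsP/andP => [[[x0 x1] [x0_in x1_in ->]] | [z1_lt z2_lt]].
  by move: x0_in x1_in; rewrite !mem_iota.
by exists z; rewrite !mem_iota; case: z z1_lt z2_lt.
Qed.

Definition code (x : alt 2 m_ex) : nat * nat := (val (x ord0), val (x ord_max)).

Lemma code_in_codes_ex x : code x \in codes_ex.
Proof. by rewrite mem_codes_ex !ltn_ord. Qed.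

Lemma code_alt_of {x0 x1} : x0 < 2 -> x1 < 4 -> code (alt_of x0 x1) = (x0, x1).
Proof. by move=> x0_lt x1_lt; rewrite /code !alt_ofE !modn_small. Qed.

Definition issue2_utility (is_j : bool) (x0 : nat) : seq nat :=
  if is_j then (if x0 == 0 then [:: 1; 3; 2; 0] else [:: 1; 2; 3; 0]) else [:: 3; 1; 0; 2].

Definition utility (is_j : bool) (x0 x1 : nat) : nat :=
  4 * (1 - x0) + nth 0 (issue2_utility is_j x0) x1.

(* Agent 0 is the paper's agent j; every other agent, in particular agent 1 = k, ranks like k. *)
Definition pref_ex (j : 'I_15) : rel (alt 2 m_ex) :=
  fun x y => utility (j == ord0) (y ord0) (y ord_max) < utility (j == ord0) (x ord0) (x ord_max).

Lemma utility_inj is_j : injective (fun x : alt 2 m_ex => utility is_j (x ord0) (x ord_max)).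
Proof.
have uniq_u : uniq [seq utility is_j z.1 z.2 | z <- codes_ex] by case: is_j.
move=> x y eq_u; rewrite -(alt_of_val x) -(alt_of_val y).
by have [-> ->] := uniq_map_inj_in uniq_u _ _ (code_in_codes_ex x) (code_in_codes_ex y) eq_u.
Qed.

Lemma pref_ex_issue1 j (x y : alt 2 m_ex) :
  x ord_max = y ord_max -> pref_ex j x y = (x ord0 < y ord0).
Proof.
rewrite /pref_ex /utility => ->.
have issue2_lt4 is_j z t : nth 0 (issue2_utility is_j z) t < 4.
  have all_lt4 : all (fun u => u < 4) (issue2_utility is_j z).
    by rewrite /issue2_utility; case: is_j; case: (z == 0).
  have [t_lt | t_ge] := ltnP t (size (issue2_utility is_j z)); last by rewrite nth_default.
  exact: (all_nthP 0 all_lt4).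
have := issue2_lt4 (j == ord0) (x ord0) (y ord_max).
have := issue2_lt4 (j == ord0) (y ord0) (y ord_max).
by case: (x ord0) (y ord0) => [[|[|//]] ?] [[|[|//]] ?] /=; lia.
Qed.

Definition profile_of (D : seq (nat * nat)) : profile 2 m_ex 15 :=
  [ffun k : 'I_15 => alt_of (nth (0, 0) D k).1 (nth (0, 0) D k).2].

Definition vote_code (D : seq (nat * nat)) (k i : nat) : nat :=
  (if i == 0 then (nth (0, 0) D k).1 else (nth (0, 0) D k).2) %% (if i == 0 then 2 else 4).

Definition score_code (D : seq (nat * nat)) (j i c : nat) : nat :=
  count (fun k => (k != j) && (vote_code D k i == c)) (iota 0 15).

Lemma score_without_profile_of D j i c :
  score_without (profile_of D) j i c = score_code D j i c.
Proof.
rewrite /score_without (eq_bigr (fun k : 'I_15 => (vote_code D k i == c) : nat)); last first.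
  by move=> k _; rewrite ffunE -val_eqE alt_ofE.
rewrite -(big_mkord (fun k => k != j) (fun k => (vote_code D k i == c) : nat)).
by rewrite -big_mkcondr /= sum1_count.
Qed.

Definition beats_code (D : seq (nat * nat)) (j : 'I_15) (b' b : nat * nat) : bool :=
  has (fun x => has (fun y =>
    [&& utility (j == ord0) y.1 y.2 < utility (j == ord0) x.1 x.2,
        achievable_pair 2 (score_code D j 0) 2 b'.1 b.1 x.1 y.1 &
        achievable_pair 4 (score_code D j 1) 1 b'.2 b.2 x.2 y.2]) codes_ex) codes_ex.

Lemma beats_codeP D j (b' b : alt 2 m_ex) :
  S_beats (uncertainty_set (profile_of D) j (@r_ex 15 j)) (pref_ex j) b' b <->
  beats_code D j (code b') (code b).
Proof.
rewrite (S_beats_uncertaintyP _ _ _ _ _ _ (score_code D j)); last exact: score_without_profile_of.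
split=> [[x [y [Rxy ach]]] | /hasP[[x0 x1] x_in /hasP[[y0 y1] y_in /and3P[Rxy ach0 ach1]]]].
  apply/hasP; exists (code x); first exact: code_in_codes_ex.
  apply/hasP; exists (code y); first exact: code_in_codes_ex.
  by apply/and3P; split; [exact: Rxy | exact: ach ord0 | exact: ach ord_max].
move: x_in y_in; rewrite !mem_codes_ex /= => /andP[x0_lt x1_lt] /andP[y0_lt y1_lt].
have [cx0 cx1] := (pair_equal_spec _ _ _ _).1 (code_alt_of x0_lt x1_lt).
have [cy0 cy1] := (pair_equal_spec _ _ _ _).1 (code_alt_of y0_lt y1_lt).
exists (alt_of x0 x1), (alt_of y0 y1); split; first by rewrite /pref_ex cx0 cx1 cy0 cy1.
by move=> i; case: (ord2_cases i) => ->; rewrite ?cx0 ?cx1 ?cy0 ?cy1.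
Qed.

Definition dominates_code D j (b' b : nat * nat) : bool :=
  beats_code D j b' b && ~~ beats_code D j b b'.

Lemma dominates_codeP D j (b' b : alt 2 m_ex) :
  S_dominates (uncertainty_set (profile_of D) j (@r_ex 15 j)) (pref_ex j) b' b <->
  dominates_code D j (code b') (code b).
Proof.
rewrite /dominates_code.
split=> [[/beats_codeP -> /beats_codeP/negP //] | /andP[/beats_codeP beats /negP not_beats]].
by split=> // /beats_codeP.
Qed.

Definition vote_of D (j : nat) : nat * nat := (vote_code D j 0, vote_code D j 1).

Definition ldi_step_code D j (y : nat) : bool :=
  dominates_code D j ((vote_of D j).1, y) (vote_of D j) &&
  ~~ has (fun z => dominates_code D j ((vote_of D j).1, z) ((vote_of D j).1, y)) (iota 0 4).

Lemma profile_ofE D j i : val (profile_of D j i) = vote_code D j i.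
Proof. by rewrite ffunE alt_ofE. Qed.

Lemma code_profile_of D j : code (profile_of D j) = vote_of D j.
Proof. by rewrite /code !profile_ofE. Qed.

Lemma LDI_step_of_code D j y : y < 4 -> ldi_step_code D j y ->
  LDI_step pref_ex (@r_ex 15) (profile_of D) j ord_max (alt_of (vote_code D j 0) y).
Proof.
move=> y_lt /andP[dom undominated].
have code_b' : code (alt_of (vote_code D j 0) y) = ((vote_of D j).1, y).
  by rewrite code_alt_of // ltn_pmod.
split; first by apply/dominates_codeP; rewrite code_b' code_profile_of.
split.
  move=> i; case: (ord2_cases i) => -> // _; apply: val_inj.
  by rewrite profile_ofE alt_ofE modn_mod.
case=> b'' [diff /dominates_codeP dom'']; apply: (negP undominated); apply/hasP.
exists (val (b'' ord_max)); first by rewrite mem_iota ltn_ord.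
have b''0 : val (b'' ord0) = (vote_of D j).1 by rewrite /= -(diff ord0) // profile_ofE.
by rewrite code_b' /code b''0 in dom''.
Qed.

Lemma update_profile_of D (j : 'I_15) x0 x1 :
  update (profile_of D) j (alt_of x0 x1) = profile_of (set_nth (0, 0) D j (x0, x1)).
Proof.
apply/ffunP => k; rewrite !ffunE nth_set_nth /=.
have [-> | ne] := eqVneq k j; first by rewrite !eqxx.
by rewrite (negbTE (ne : (k : nat) != j)).
Qed.

(* Agents 0 and 1 are j and k; for xj = xk = a the score tuple is {(7,8),(3,5,5,2)}. *)
Definition votes (xj xk : nat) : seq (nat * nat) :=
  [:: (0, xj); (0, xk); (0, 0); (0, 1); (0, 1); (0, 1); (0, 1); (1, 1);
      (1, 2); (1, 2); (1, 2); (1, 2); (1, 2); (1, 3); (1, 3)].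

Definition cycle_profile (t : nat) : profile 2 m_ex 15 :=
  let: (xj, xk) := nth (0, 0) [:: (0, 0); (3, 0); (3, 3); (0, 3)] (t %% 4) in
  profile_of (votes xj xk).

Lemma cycle_step t : ldi_move pref_ex (@r_ex 15) (cycle_profile t) (cycle_profile t.+1).
Proof.
rewrite /cycle_profile; have -> : t.+1 %% 4 = (t %% 4).+1 %% 4 by rewrite -addn1 -modnDml addn1.
have : t %% 4 < 4 by rewrite ltn_mod.
case: (t %% 4) => [|[|[|[|//]]]] _ /=.
- exists ord0, ord_max, (alt_of 0 3); rewrite update_profile_of; split=> //.
  by apply: LDI_step_of_code => //; vm_compute.
- exists (@Ordinal 15 1 isT), ord_max, (alt_of 0 3); rewrite update_profile_of; split=> //.
  by apply: LDI_step_of_code => //; vm_compute.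
- exists ord0, ord_max, (alt_of 0 0); rewrite update_profile_of; split=> //.
  by apply: LDI_step_of_code => //; vm_compute.
- exists (@Ordinal 15 1 isT), ord_max, (alt_of 0 0); rewrite update_profile_of; split=> //.
  by apply: LDI_step_of_code => //; vm_compute.
Qed.

Theorem proposition3 :
  exists pref : 'I_15 -> rel (@alt 2 m_ex),
    (forall j, strict_ranking (pref j)) /\
    (forall j, O_legal (1%g : {perm 'I_2}) (pref j)) /\
    ~ ldi_converges pref (@r_ex 15).
Proof.
exists pref_ex; split; [|split] => [j | j | ].
- exact/strict_ranking_utility/utility_inj.
- apply: O_legal_two_issues => x y x' y' same same' eq_x0 eq_y0.
  by rewrite !pref_ex_issue1 // eq_x0 eq_y0.
- by case; exists cycle_profile; apply: cycle_step.
Qed.
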